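(* Let $A$ be a left brace with $A^{(3)}=\{0\}$ and let $a\in A$. Define $a_1=a$ and $a_{j+1}=a*a_j$ for $j\ge1$. Then for every positive integer $n$ and every $j\ge1$, \[(na)*a_j=\sum_{k=1}^n\binom{n}{k}a_{k+j},\] where $na$ denotes the $n$-fold sum $a+\dots+a$ in $(A,+)$.
   Context: A left brace $(A,+,\cdot)$ is a set $A$ with two binary operations such that $(A,+)$ is an abelian group, $(A,\cdot)$ is a group, and $a(b+c)=ab-a+ac$ for all $a,b,c\in A$. For $a,b\in A$ set $\lambda_a(b)=-a+ab$ and $a*b=-a+ab-b=\lambda_a(b)-b$. For subsets $L,M\subseteq A$, $L*M$ is the subgroup of $(A,+)$ generated by $\{l*m\mid l\in L,m\in M\}$. Set $A^{(1)}=A$ and $A^{(r+1)}=A^{(r)}*A$ for $r\ge1$. *)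

From mathcomp Require Import all_boot all_algebra.
Set Implicit Arguments. Unset Strict Implicit. Unset Printing Implicit Defensive.
Import GRing.Theory.
Local Open Scope ring_scope.

(* A left brace: (A,+) is the abelian group given by the zmodType A,
   (A,.) is a group given by bmul, bone, binv, and the brace compatibility
   a(b+c) = ab - a + ac holds. *)
Record left_brace (A : zmodType) := LeftBrace {
  bmul : A -> A -> A;
  bone : A;
  binv : A -> A;
  bmulA : forall a b c, bmul a (bmul b c) = bmul (bmul a b) c;
  bmul1l : forall a, bmul bone a = a;
  bmul1r : forall a, bmul a bone = a;
  bmulVl : forall a, bmul (binv a) a = bone;
  bmulVr : forall a, bmul a (binv a) = bone;
  bmulDr : forall a b c, bmul a (b + c) = bmul a b - a + bmul a c
}.

Definition bstar (A : zmodType) (B : left_brace A) (a b : A) : A :=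
  - a + bmul B a b - b.

Inductive add_span (A : zmodType) (S : A -> Prop) : A -> Prop :=
  | add_span_gen : forall x, S x -> add_span S x
  | add_span_0 : add_span S 0
  | add_span_sub : forall x y, add_span S x -> add_span S y -> add_span S (x - y).

Definition set_star (A : zmodType) (B : left_brace A) (L M : A -> Prop) : A -> Prop :=
  add_span (fun x => exists l m, L l /\ M m /\ x = bstar B l m).

(* brace_series B r = A^(r) (for r >= 1; A^(0) is set to A as well). *)
Fixpoint brace_series (A : zmodType) (B : left_brace A) (r : nat) : A -> Prop :=
  match r with
  | 0 => fun _ => True
  | 1 => fun _ => True
  | r'.+1 => set_star B (brace_series B r') (fun _ => True)
  end.

(* a_1 = a, a_{j+1} = a * a_j; seq_a B a j = a_j for j >= 1. *)
Fixpoint seq_a (A : zmodType) (B : left_brace A) (a : A) (j : nat) : A :=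
  match j with
  | 0 => a
  | 1 => a
  | j'.+1 => bstar B a (seq_a B a j')
  end.

From mathcomp Require Import all_boot all_algebra.
Import GRing.Theory.
Local Open Scope ring_scope.

(* Write lam y x = -y + y x for the lambda-maps of the brace.
   1. In any left brace each lam y is an endomorphism of (A,+), lam is a
      morphism from (A,.) (so lam_{yz} = lam_y lam_z), and a * x = lam a x - x.
   2. If A^(3) = 0 then every s in A^(2) acts trivially (lam s = id) and A^(2)
      is lam-stable; writing y + z = y . lam_{y^-1}(z) with
      lam_{y^-1}(z) - z in A^(2) gives lam_{y+z} = lam_y lam_z, i.e. lam is
      also a morphism from (A,+).
   3. Hence lam_{na} = (lam_a)^n = (id + d)^n with d = a * -, an additive map
      commuting with id, so the binomial theorem gives
      (na) * x = sum_{k=1}^n C(n,k) d^k x.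
   4. Since a_{k+j} = d^k a_j for j >= 1, the theorem is step 3 at x = a_j. *)

Section LambdaMaps.
Variables (A : zmodType) (B : left_brace A).
Local Notation m := (bmul B).

Definition lam (y x : A) : A := - y + m y x.

Lemma bstarE y x : bstar B y x = lam y x - x.
Proof. by []. Qed.

Lemma bmulE y z : m y z = y + lam y z.
Proof. by rewrite /lam addrA subrr add0r. Qed.

Lemma lamD y b c : lam y (b + c) = lam y b + lam y c.
Proof. by rewrite /lam bmulDr !addrA. Qed.

Lemma lam0 y : lam y 0 = 0.
Proof.
have h := lamD y 0 0; rewrite addr0 in h.
by apply: (@addrI _ (lam y 0)); rewrite addr0 -h.
Qed.

Lemma lamN y b : lam y (- b) = - lam y b.
Proof. by apply: (@addrI _ (lam y b)); rewrite -lamD !subrr lam0. Qed.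

Lemma lamM y z x : lam (m y z) x = lam y (lam z x).
Proof.
rewrite [lam z x]/lam lamD lamN /lam opprD opprK addrA (addrAC y) subrr add0r.
by rewrite bmulA.
Qed.

Lemma bone0 : bone B = 0.
Proof.
have := bmulDr B (bone B) 0 0; rewrite !bmul1l addr0 sub0r addr0.
by move=> /eqP; rewrite eq_sym oppr_eq0 => /eqP.
Qed.

Lemma lam_zero x : lam 0 x = x.
Proof. by rewrite /lam oppr0 add0r -bone0 bmul1l. Qed.

Lemma lamVK z x : lam z (lam (binv B z) x) = x.
Proof. by rewrite -lamM bmulVr bone0 lam_zero. Qed.

End LambdaMaps.
Arguments lam {A}.

Lemma add_span_add (A : zmodType) (S : A -> Prop) x y :
  add_span S x -> add_span S y -> add_span S (x + y).
Proof.
move=> hx hy; rewrite -[y]opprK -[- y]sub0r.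
by apply: add_span_sub => //; apply: add_span_sub => //; apply: add_span_0.
Qed.

Section SquareZeroSeries.
Variables (A : zmodType) (B : left_brace A).
Hypothesis H3 : forall x : A, brace_series B 3 x -> x = 0.

Let S2 := brace_series B 2.

Lemma S2_star u v : S2 (bstar B u v).
Proof. by apply: add_span_gen; exists u, v. Qed.

(* A^(2) is stable under every lambda-map, since lam v s = s + v * s. *)
Lemma S2_lam v s : S2 s -> S2 (lam B v s).
Proof.
move=> hs; have -> : lam B v s = s + bstar B v s by rewrite bstarE addrC subrK.
by move: hs (S2_star v s); rewrite /S2 /=; apply: add_span_add.
Qed.

(* Since A^(2) * A = A^(3) = 0, elements of A^(2) act trivially. *)
Lemma S2_lam_id s x : S2 s -> lam B s x = x.
Proof.
move=> hs; have : bstar B s x = 0 by apply: H3; apply: add_span_gen; exists s, x.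
by rewrite bstarE => /eqP; rewrite subr_eq0 => /eqP.
Qed.

Lemma lam_addS2 z w x : S2 w -> lam B (z + w) x = lam B z x.
Proof.
move=> hw; set w' := lam B (binv B z) w.
have -> : z + w = bmul B z w' by rewrite bmulE /w' lamVK.
by rewrite lamM (S2_lam_id _ x (S2_lam (binv B z) _ hw)).
Qed.

Lemma lam_add y z x : lam B (y + z) x = lam B y (lam B z x).
Proof.
set z' := lam B (binv B y) z.
have -> : y + z = bmul B y z' by rewrite bmulE /z' lamVK.
rewrite lamM; congr (lam B y _).
have -> : z' = z + bstar B (binv B y) z by rewrite bstarE addrC subrK.
exact/lam_addS2/S2_star.
Qed.

Variable a : A.

Let d x := bstar B a x.

Lemma iter_dD k x y : iter k d (x + y) = iter k d x + iter k d y.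
Proof. by elim: k => //= k ->; rewrite /d !bstarE lamD opprD addrACA. Qed.

Lemma lam_natmul n x :
  lam B (a *+ n) x = \sum_(k < n.+1) iter k d x *+ 'C(n, k).
Proof.
elim: n x => [|n IH] x.
  by rewrite mulr0n lam_zero big_ord_recl big_ord0 addr0.
rewrite mulrSr lam_add IH.
have -> : lam B a x = x + d x by rewrite /d bstarE addrC subrK.
under eq_bigr => k _ do rewrite iter_dD mulrnDl -iterSr.
rewrite big_split /= [in RHS]big_ord_recl /=.
under [in RHS]eq_bigr => k _ do rewrite binS mulrnDr.
rewrite big_split /= addrA; congr (_ + _).
rewrite [in RHS]big_ord_recr /= (bin_small (ltnSn n)) mulr0n addr0.
by rewrite [in LHS]big_ord_recl !bin0.
Qed.

Lemma star_natmul n x :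
  bstar B (a *+ n) x = \sum_(1 <= k < n.+1) iter k d x *+ 'C(n, k).
Proof.
rewrite bstarE lam_natmul big_ord_recl /= bin0 mulr1n addrC addKr.
by rewrite big_add1 big_mkord.
Qed.

Lemma seq_a_iter k j : (1 <= j)%N -> seq_a B a (k + j) = iter k d (seq_a B a j).
Proof.
move=> hj; elim: k => // k IH; rewrite iterS -IH addSn.
by case: (k + j)%N (leq_trans hj (leq_addl k j)) => [|[|p]].
Qed.

End SquareZeroSeries.

Theorem mainTheorem6 (A : zmodType) (B : left_brace A)
  (H3 : forall x : A, brace_series B 3 x -> x = 0) (a : A) (n j : nat) :
  (0 < n)%N -> (1 <= j)%N ->
  bstar B (a *+ n) (seq_a B a j) = \sum_(1 <= k < n.+1) (seq_a B a (k + j)) *+ 'C(n, k).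
Proof.
move=> _ hj; rewrite (star_natmul _ _ H3); apply: eq_bigr => k _.
by rewrite (seq_a_iter _ _ _ _ _ hj).
Qed.
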